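(* $\mathsf d\otimes\mathsf I\mathrel{;}\mathsf I\otimes\mathsf e\ \sim\ \mathsf I\ \sim\ \mathsf I\otimes\mathsf d\mathrel{;}\mathsf e\otimes\mathsf I$, where $\otimes$ binds tighter than $;$.
   Context: Wire calculus. Fix a set $\Sigma$ of signals and $\iota\notin\Sigma$; $L=\Sigma\cup\{\iota\}$; $\vec\iota$ denotes a word of $\iota$'s. Prefix strings are words over atoms: signal variables $x$, binders $\lambda x$, $\iota$, constants $\sigma\in\Sigma$. Terms: $P::= Y \mid P\mathrel{;}P\mid P\otimes P\mid \frac{u}{v}.P\mid P+P\mid \mu Y{:}\tau.P$ ($\tau$ a sort $(k,l)$). In $\frac{u}{v}.P$, variables $x$ with $\lambda x$ in $uv$ are bound (set $bd$). Sorting: $P:(k,n),R:(n,l)\Rightarrow P\mathrel{;}R:(k,l)$; $P:(k,l),Q:(m,n)\Rightarrow P\otimes Q:(k+m,l+n)$; $\frac{u}{v}.P:(|u|,|v|)$ when $P$ has that sort; $\mu Y{:}\tau.P:\tau$; $P+Q:\tau$ for $P,Q:\tau$. Closed terms only. Transitions $P\xrightarrow[\vec b]{\vec a}Q$ are generated by: (Refl) $P\xrightarrow[\vec\iota]{\vec\iota}P$; ($\iota$L) $P\xrightarrow[\vec\iota]{\vec\iota}R\xrightarrow[\vec b]{\vec a}Q$ gives $P\xrightarrow[\vec b]{\vec a}Q$; ($\iota$R) $P\xrightarrow[\vec b]{\vec a}R\xrightarrow[\vec\iota]{\vec\iota}Q$ gives $P\xrightarrow[\vec b]{\vec a}Q$;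 (Cut) $P\xrightarrow[\vec c]{\vec a}Q$, $R\xrightarrow[\vec b]{\vec c}S$ give $P\mathrel{;}R\xrightarrow[\vec b]{\vec a}Q\mathrel{;}S$; (Ten) $P\xrightarrow[\vec b]{\vec a}Q$, $R\xrightarrow[\vec d]{\vec c}S$ give $P\otimes R\xrightarrow[\vec b\vec d]{\vec a\vec c}Q\otimes S$; (Pref) for each $\sigma:bd\to L$, $\frac{u}{v}.P\xrightarrow[v|_\sigma]{u|_\sigma}P|_\sigma$; (Rec) $P[\mu Y.P/Y]\xrightarrow[\vec b]{\vec a}Q$ gives $\mu Y.P\xrightarrow[\vec b]{\vec a}Q$; ($+\iota$) and ($+$L/R) as in CSP external choice (choice resolved only by a transition whose labels are not all $\iota$). Bisimilarity $\sim$: $P\sim Q$ iff some relation $S\ni(P,Q)$ satisfies: if $(P',Q')\in S$ and $P'\xrightarrow[\vec b]{\vec a}P''$ then $Q'\xrightarrow[\vec b]{\vec a}Q''$ with $(P'',Q'')\in S$, and symmetrically. Constants: $\mathsf I=\mu Y.\frac{\lambda x}{\lambda x}.Y:(1,1)$ (transitions $\mathsf I\xrightarrow[a]{a}\mathsf I$ for $a\in L$); $\mathsf d=\mu Y.\frac{\epsilon}{\lambda x\lambda x}.Y:(0,2)$ (transitions $\mathsf d\xrightarrow[aa]{}\mathsf d$); $\mathsf e=\mu Y.\frac{\lambda x\lambda x}{\epsilon}.Y:(2,0)$ (transitions $\mathsf e\xrightarrow[]{aa}\mathsf e$), $\epsilon$ the empty string. *)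

From Stdlib Require Import List Arith Bool.
Import ListNotations.
Set Implicit Arguments.

Section Wire.
Variable Sigma : Type.

(* L = Sigma ∪ {ι};  None plays the role of ι *)
Definition lab := option Sigma.
Definition iota : lab := None.
Definition iotas (n : nat) : list lab := repeat iota n.

Inductive atom : Type :=
| AVar  : nat -> atom
| ALam  : nat -> atom
| AIota : atom
| AConst : Sigma -> atom.

Definition sort := (nat * nat)%type.

Inductive term : Type :=
| TVar : nat -> term
| Seq  : term -> term -> term
| Ten  : term -> term -> term
| Pref : list atom -> list atom -> term -> term
| Plus : term -> term -> term
| Mu   : nat -> sort -> term -> term.

Fixpoint binders (w : list atom) : list nat :=
  match w with
  | [] => []
  | ALam x :: w' => x :: binders w'
  | _ :: w' => binders w'
  end.
Definition bd (u v : list atom) : list nat := binders (u ++ v).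

Definition memb (x : nat) (l : list nat) : bool := existsb (Nat.eqb x) l.

Definition atom_of_lab (a : lab) : atom :=
  match a with Some c => AConst c | None => AIota end.

Definition subst_atom (s : nat -> option lab) (a : atom) : atom :=
  match a with
  | AVar x => match s x with Some l => atom_of_lab l | None => AVar x end
  | _ => a
  end.

Fixpoint ssubst (s : nat -> option lab) (P : term) : term :=
  match P with
  | TVar Y => TVar Y
  | Seq P1 P2 => Seq (ssubst s P1) (ssubst s P2)
  | Ten P1 P2 => Ten (ssubst s P1) (ssubst s P2)
  | Pref u v P1 =>
      let s' := fun x => if memb x (bd u v) then None else s x in
      Pref (map (subst_atom s') u) (map (subst_atom s') v) (ssubst s' P1)
  | Plus P1 P2 => Plus (ssubst s P1) (ssubst s P2)
  | Mu Y t P1 => Mu Y t (ssubst s P1)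
  end.

(* P|_σ for σ : bd → L (given as a function on all variables, only its
   values on bd u v are used) *)
Definition restrict (u v : list atom) (sg : nat -> lab) : nat -> option lab :=
  fun x => if memb x (bd u v) then Some (sg x) else None.

Definition term_at (u v : list atom) (sg : nat -> lab) (P : term) : term :=
  ssubst (restrict u v sg) P.

Definition lab_of_atom (sg : nat -> lab) (a : atom) : lab :=
  match a with
  | AVar x => sg x
  | ALam x => sg x
  | AIota => iota
  | AConst c => Some c
  end.
Definition word_at (sg : nat -> lab) (w : list atom) : list lab :=
  map (lab_of_atom sg) w.

(* substitution of a (closed) term for a process variable *)
Fixpoint tsubst (Y : nat) (Q : term) (P : term) : term :=
  match P with
  | TVar Y' => if Nat.eqb Y' Y then Q else TVar Y'
  | Seq P1 P2 => Seq (tsubst Y Q P1) (tsubst Y Q P2)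
  | Ten P1 P2 => Ten (tsubst Y Q P1) (tsubst Y Q P2)
  | Pref u v P1 => Pref u v (tsubst Y Q P1)
  | Plus P1 P2 => Plus (tsubst Y Q P1) (tsubst Y Q P2)
  | Mu Y' t P1 => if Nat.eqb Y' Y then Mu Y' t P1 else Mu Y' t (tsubst Y Q P1)
  end.

Fixpoint lookup (G : list (nat * sort)) (Y : nat) : option sort :=
  match G with
  | [] => None
  | (Y', t) :: G' => if Nat.eqb Y Y' then Some t else lookup G' Y
  end.

Inductive has_sort : list (nat * sort) -> term -> sort -> Prop :=
| sort_var : forall G Y t, lookup G Y = Some t -> has_sort G (TVar Y) t
| sort_seq : forall G P R k n l,
    has_sort G P (k, n) -> has_sort G R (n, l) -> has_sort G (Seq P R) (k, l)
| sort_ten : forall G P Q k l m n,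
    has_sort G P (k, l) -> has_sort G Q (m, n) -> has_sort G (Ten P Q) (k + m, l + n)
| sort_pref : forall G u v P,
    has_sort G P (length u, length v) -> has_sort G (Pref u v P) (length u, length v)
| sort_plus : forall G P Q t,
    has_sort G P t -> has_sort G Q t -> has_sort G (Plus P Q) t
| sort_mu : forall G Y t P,
    has_sort ((Y, t) :: G) P t -> has_sort G (Mu Y t P) t.

Definition all_iota (w : list lab) : Prop := forall x, In x w -> x = iota.

(* labelled transitions  P --a/b--> Q  (a: left/top labels, b: right/bottom) *)
Inductive step : term -> list lab -> list lab -> term -> Prop :=
| st_refl : forall P k l, has_sort [] P (k, l) -> step P (iotas k) (iotas l) P
| st_iotaL : forall P R Q k l a b,
    step P (iotas k) (iotas l) R -> step R a b Q -> step P a b Q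
| st_iotaR : forall P R Q k l a b,
    step P a b R -> step R (iotas k) (iotas l) Q -> step P a b Q
| st_cut : forall P Q R S a b c,
    step P a c Q -> step R c b S -> step (Seq P R) a b (Seq Q S)
| st_ten : forall P Q R S a b c d,
    step P a b Q -> step R c d S -> step (Ten P R) (a ++ c) (b ++ d) (Ten Q S)
| st_pref : forall u v P (sg : nat -> lab),
    step (Pref u v P) (word_at sg u) (word_at sg v) (term_at u v sg P)
| st_rec : forall Y t P a b Q,
    step (tsubst Y (Mu Y t P) P) a b Q -> step (Mu Y t P) a b Q
| st_plus_iota : forall P P' Q Q' k l,
    step P (iotas k) (iotas l) P' -> step Q (iotas k) (iotas l) Q' ->
    step (Plus P Q) (iotas k) (iotas l) (Plus P' Q')
| st_plusL : forall P P' Q a b,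
    step P a b P' -> ~ all_iota (a ++ b) -> step (Plus P Q) a b P'
| st_plusR : forall P Q Q' a b,
    step Q a b Q' -> ~ all_iota (a ++ b) -> step (Plus P Q) a b Q'.

Definition bisimulation (S : term -> term -> Prop) : Prop :=
  forall P Q, S P Q ->
    (forall a b P', step P a b P' -> exists Q', step Q a b Q' /\ S P' Q') /\
    (forall a b Q', step Q a b Q' -> exists P', step P a b P' /\ S P' Q').

Definition bisim (P Q : term) : Prop :=
  exists S, S P Q /\ bisimulation S.

Definition tI : term := Mu 0 (1, 1) (Pref [ALam 0] [ALam 0] (TVar 0)).
Definition td : term := Mu 0 (0, 2) (Pref [] [ALam 0; ALam 0] (TVar 0)).
Definition te : term := Mu 0 (2, 0) (Pref [ALam 0; ALam 0] [] (TVar 0)).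

End Wire.

Arguments TVar {Sigma}.
Arguments tI {Sigma}.
Arguments td {Sigma}.
Arguments te {Sigma}.

(* All three constants are instances of [wire m n], each of whose steps copies
   one signal onto all its m + n ports.  Hence every state reachable from the
   two snakes is again a 2x2 grid of such wires; the equation on the inner ports
   forces all four copied signals to coincide, so the snakes, like [I], can only
   do [x/x] steps, and can do one for every x.  Any two sets of states with this
   behaviour are bisimilar. *)

From Stdlib Require Import List.
Import ListNotations.

Section WireCalculus.
Variable Sigma : Type.

Lemma app_eq_iotas (a1 a2 : list (lab Sigma)) k :
  a1 ++ a2 = iotas Sigma k ->
  a1 = iotas Sigma (length a1) /\ a2 = iotas Sigma (length a2).
Proof.
  unfold iotas; intros H.
  destruct (repeat_eq_app _ _ _ _ (eq_sym H)) as [H1 H2]; auto.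
Qed.

(* Unlike [;], a tensor step always splits into steps of its factors, since the
   iota-rules split along the concatenation of labels. *)
Lemma step_Ten_inv (X Y T : term Sigma) a b :
  step (Ten X Y) a b T ->
  exists a1 a2 b1 b2 X' Y', a = a1 ++ a2 /\ b = b1 ++ b2 /\
    step X a1 b1 X' /\ step Y a2 b2 Y' /\ T = Ten X' Y'.
Proof.
  remember (Ten X Y) as T0 eqn:E; intros H; revert X Y E.
  induction H as [P k l HP | P R Q k l a b _ IH1 _ IH2 | P R Q k l a b _ IH1 _ IH2
    | | P Q R S a b c d HPQ _ HRS _ | | | | |]; intros X0 Y0 E; try discriminate.
  - subst P; inversion HP; subst.
    exists (iotas Sigma k0), (iotas Sigma m), (iotas Sigma l0), (iotas Sigma n), X0, Y0.
    unfold iotas; rewrite !repeat_app.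
    repeat split; apply st_refl; assumption.
  - destruct (IH1 X0 Y0 E) as (a1 & a2 & b1 & b2 & X1 & Y1 & Ha & Hb & HX & HY & ->).
    destruct (IH2 X1 Y1 eq_refl) as (a1' & a2' & b1' & b2' & X' & Y' & -> & -> & HX' & HY' & ->).
    destruct (app_eq_iotas _ _ _ (eq_sym Ha)) as [Ha1 Ha2].
    destruct (app_eq_iotas _ _ _ (eq_sym Hb)) as [Hb1 Hb2].
    rewrite Ha1, Hb1 in HX; rewrite Ha2, Hb2 in HY.
    exists a1', a2', b1', b2', X', Y'.
    repeat split; eapply st_iotaL; eassumption.
  - destruct (IH1 X0 Y0 E) as (a1 & a2 & b1 & b2 & X1 & Y1 & -> & -> & HX & HY & ->).
    destruct (IH2 X1 Y1 eq_refl) as (a1' & a2' & b1' & b2' & X' & Y' & Ha & Hb & HX' & HY' & ->).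
    destruct (app_eq_iotas _ _ _ (eq_sym Ha)) as [Ha1 Ha2].
    destruct (app_eq_iotas _ _ _ (eq_sym Hb)) as [Hb1 Hb2].
    rewrite Ha1, Hb1 in HX'; rewrite Ha2, Hb2 in HY'.
    exists a1, a2, b1, b2, X', Y'.
    repeat split; eapply st_iotaR; eassumption.
  - injection E as -> ->.
    exists a, c, b, d, Q, S; repeat split; assumption.
Qed.

Definition lams (n : nat) : list (atom Sigma) := repeat (ALam Sigma 0) n.

Definition wire (m n : nat) : term Sigma :=
  Mu 0 (m, n) (Pref (lams m) (lams n) (TVar 0)).

Definition wire_unfolded (m n : nat) : term Sigma :=
  Pref (lams m) (lams n) (wire m n).

Definition wire_state (m n : nat) (P : term Sigma) : Prop :=
  P = wire m n \/ P = wire_unfolded m n.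

Lemma word_at_lams (sg : nat -> lab Sigma) n :
  word_at sg (lams n) = repeat (sg 0) n.
Proof. apply map_repeat. Qed.

Lemma ssubst_wire (s : nat -> option (lab Sigma)) m n :
  ssubst s (wire m n) = wire m n.
Proof. unfold wire, lams; simpl; rewrite !map_repeat; reflexivity. Qed.

Lemma has_sort_wire_state G m n (P : term Sigma) s :
  wire_state m n P -> has_sort G P s -> s = (m, n).
Proof.
  intros [-> | ->] H; inversion H; subst; [reflexivity|].
  unfold lams; rewrite !repeat_length; reflexivity.
Qed.

Lemma wire_state_step m n (P : term Sigma) x :
  wire_state m n P -> step P (repeat x m) (repeat x n) (wire m n).
Proof.
  assert (Hunf : step (wire_unfolded m n) (repeat x m) (repeat x n) (wire m n)).
  { pose proof (st_pref (lams m) (lams n) (wire m n) (fun _ => x)) as H.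
    rewrite !word_at_lams in H; unfold term_at in H; rewrite ssubst_wire in H.
    exact H. }
  intros [-> | ->]; [apply st_rec|]; exact Hunf.
Qed.

Lemma wire_state_step_inv m n (P Q : term Sigma) a b :
  step P a b Q -> wire_state m n P ->
  exists x, a = repeat x m /\ b = repeat x n /\ wire_state m n Q.
Proof.
  induction 1 as [P k l HP | P R Q k l a b _ IH1 _ IH2 | P R Q k l a b _ IH1 _ IH2
    | | | u v P sg | Y t P a b Q _ IH | | |]; intros HW;
    try (destruct HW as [E | E]; discriminate E).
  - injection (has_sort_wire_state _ _ _ _ _ HW HP) as -> ->.
    exists (iota Sigma); auto.
  - destruct (IH1 HW) as (_ & _ & _ & HR); exact (IH2 HR).
  - destruct (IH1 HW) as (x & -> & -> & HR).
    destruct (IH2 HR) as (_ & _ & _ & HQ).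
    exists x; auto.
  - destruct HW as [E | E]; [discriminate E|].
    injection E as -> -> ->.
    exists (sg 0); rewrite !word_at_lams; unfold term_at; rewrite ssubst_wire.
    repeat split; left; reflexivity.
  - destruct HW as [E | E]; [|discriminate E].
    injection E as -> -> ->.
    apply IH; right; reflexivity.
Qed.

Section Grid.
Variables m1 n1 m2 n2 m3 n3 m4 n4 : nat.

Definition grid_state (P : term Sigma) : Prop :=
  exists A B C D, P = Seq (Ten A B) (Ten C D) /\
    wire_state m1 n1 A /\ wire_state m2 n2 B /\
    wire_state m3 n3 C /\ wire_state m4 n4 D.

Lemma grid_state_wires :
  grid_state (Seq (Ten (wire m1 n1) (wire m2 n2)) (Ten (wire m3 n3) (wire m4 n4))).
Proof.
  do 4 eexists; split; [reflexivity|]; repeat split; left; reflexivity.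
Qed.

Lemma has_sort_grid_state G (P : term Sigma) k l :
  grid_state P -> has_sort G P (k, l) ->
  k = m1 + m2 /\ l = n3 + n4 /\ n1 + n2 = m3 + m4.
Proof.
  intros (A & B & C & D & -> & HA & HB & HC & HD) H.
  inversion H as [| ? ? ? ? n ? HAB HCD | | | |]; subst.
  inversion HAB; inversion HCD; subst.
  repeat match goal with
  | HW : wire_state _ _ ?X, HS : has_sort _ ?X _ |- _ =>
      injection (has_sort_wire_state _ _ _ _ _ HW HS) as -> ->; clear HS
  end.
  auto.
Qed.

Lemma grid_state_step (P : term Sigma) x y z w :
  grid_state P ->
  repeat x n1 ++ repeat y n2 = repeat z m3 ++ repeat w m4 ->
  exists Q, step P (repeat x m1 ++ repeat y m2) (repeat z n3 ++ repeat w n4) Q /\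
    grid_state Q.
Proof.
  intros (A & B & C & D & -> & HA & HB & HC & HD) Hmid.
  eexists; split; [|apply grid_state_wires].
  apply st_cut with (c := repeat x n1 ++ repeat y n2).
  - apply st_ten; apply wire_state_step; assumption.
  - rewrite Hmid; apply st_ten; apply wire_state_step; assumption.
Qed.

Lemma grid_state_step_inv (P Q : term Sigma) a b :
  step P a b Q -> grid_state P ->
  exists x y z w, repeat x n1 ++ repeat y n2 = repeat z m3 ++ repeat w m4 /\
    a = repeat x m1 ++ repeat y m2 /\ b = repeat z n3 ++ repeat w n4 /\
    grid_state Q.
Proof.
  induction 1 as [P k l HP | P R Q k l a b _ IH1 _ IH2 | P R Q k l a b _ IH1 _ IH2
    | P Q R S a b c HPQ _ HRS _ | | | | | |]; intros HG;
    try (destruct HG as (? & ? & ? & ? & E & _); discriminate E).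
  - destruct (has_sort_grid_state _ _ _ _ HG HP) as (-> & -> & Hmid).
    exists (iota Sigma), (iota Sigma), (iota Sigma), (iota Sigma); unfold iotas; rewrite !repeat_app.
    repeat split; [|assumption].
    rewrite <- !repeat_app, Hmid; reflexivity.
  - destruct (IH1 HG) as (_ & _ & _ & _ & _ & _ & _ & HR); exact (IH2 HR).
  - destruct (IH1 HG) as (x & y & z & w & Hmid & -> & -> & HR).
    destruct (IH2 HR) as (_ & _ & _ & _ & _ & _ & _ & HQ).
    exists x, y, z, w; auto.
  - destruct HG as (A & B & C & D & E & HA & HB & HC & HD).
    injection E as -> ->.
    destruct (step_Ten_inv _ _ _ _ _ HPQ)
      as (a1 & a2 & c1 & c2 & A' & B' & -> & -> & SA & SB & ->).
    destruct (step_Ten_inv _ _ _ _ _ HRS)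
      as (c3 & c4 & b1 & b2 & C' & D' & Hmid & -> & SC & SD & ->).
    destruct (wire_state_step_inv _ _ _ _ _ _ SA HA) as (x & -> & -> & HA').
    destruct (wire_state_step_inv _ _ _ _ _ _ SB HB) as (y & -> & -> & HB').
    destruct (wire_state_step_inv _ _ _ _ _ _ SC HC) as (z & -> & -> & HC').
    destruct (wire_state_step_inv _ _ _ _ _ _ SD HD) as (w & -> & -> & HD').
    exists x, y, z, w; repeat split; try assumption.
    exists A', B', C', D'; auto.
Qed.

End Grid.

Definition id_like (S : term Sigma -> Prop) : Prop :=
  (forall P a b Q, step P a b Q -> S P -> (exists x, a = [x] /\ b = [x]) /\ S Q) /\
  (forall P x, S P -> exists Q, step P [x] [x] Q /\ S Q).

Lemma bisim_id_like (S1 S2 : term Sigma -> Prop) P Q :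
  id_like S1 -> id_like S2 -> S1 P -> S2 Q -> bisim P Q.
Proof.
  intros [inv1 prog1] [inv2 prog2] HP HQ.
  exists (fun P Q => S1 P /\ S2 Q); split; [auto|].
  intros P0 Q0 [H1 H2]; split.
  - intros a b P' St; destruct (inv1 _ _ _ _ St H1) as [(x & -> & ->) HP'].
    destruct (prog2 _ x H2) as (Q' & St' & HQ'); eauto.
  - intros a b Q' St; destruct (inv2 _ _ _ _ St H2) as [(x & -> & ->) HQ'].
    destruct (prog1 _ x H1) as (P' & St' & HP'); eauto.
Qed.

Lemma id_like_wire : id_like (wire_state 1 1).
Proof.
  split.
  - intros P a b Q St HW.
    destruct (wire_state_step_inv _ _ _ _ _ _ St HW) as (x & -> & -> & HQ).
    split; [eexists; split; reflexivity | exact HQ].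
  - intros P x HW; exists (wire 1 1); split.
    + exact (wire_state_step _ _ _ x HW).
    + left; reflexivity.
Qed.

Lemma id_like_snake_left : id_like (grid_state 0 2 1 1 1 1 2 0).
Proof.
  split.
  - intros P a b Q St HG.
    destruct (grid_state_step_inv _ _ _ _ _ _ _ _ _ _ _ _ St HG)
      as (x & y & z & w & Hmid & -> & -> & HQ).
    injection Hmid as -> -> ->.
    split; [eexists; split; reflexivity | exact HQ].
  - intros P x HG; exact (grid_state_step _ _ _ _ _ _ _ _ _ x x x x HG eq_refl).
Qed.

Lemma id_like_snake_right : id_like (grid_state 1 1 0 2 2 0 1 1).
Proof.
  split.
  - intros P a b Q St HG.
    destruct (grid_state_step_inv _ _ _ _ _ _ _ _ _ _ _ _ St HG)
      as (x & y & z & w & Hmid & -> & -> & HQ).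
    injection Hmid as -> -> ->.
    split; [eexists; split; reflexivity | exact HQ].
  - intros P x HG; exact (grid_state_step _ _ _ _ _ _ _ _ _ x x x x HG eq_refl).
Qed.

End WireCalculus.

Theorem mainTheorem4 (Sigma : Type) :
  bisim (Seq (Ten (@td Sigma) tI) (Ten tI te)) tI /\
  bisim (@tI Sigma) (Seq (Ten tI td) (Ten te tI)).
Proof.
  split.
  - apply (bisim_id_like _ _ _ _ _ (id_like_snake_left Sigma) (id_like_wire Sigma)).
    + exact (grid_state_wires Sigma 0 2 1 1 1 1 2 0).
    + left; reflexivity.
  - apply (bisim_id_like _ _ _ _ _ (id_like_wire Sigma) (id_like_snake_right Sigma)).
    + left; reflexivity.
    + exact (grid_state_wires Sigma 1 1 0 2 2 0 1 1).
Qed.
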